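(* Fix parameters $\mathfrak h=(h,\varepsilon,\theta)$ for which condition (M.1) holds. Let $w_h,v_h\in\mathbb V_h$ satisfy $$-\Delta^\diamond_{\infty,\mathfrak h}w_h(z)\le-\Delta^\diamond_{\infty,\mathfrak h}v_h(z)\qquad\forall z\in\mathcal N_h^I,$$ and assume that either $-\Delta^\diamond_{\infty,\mathfrak h}w_h(z)\le0$ for every $z\in\mathcal N_h^I$, or $-\Delta^\diamond_{\infty,\mathfrak h}v_h(z)\ge0$ for every $z\in\mathcal N_h^I$. Then $$\max_{z\in\mathcal N_h}\big[w_h(z)-v_h(z)\big]=\max_{z\in\mathcal N_h^b}\big[w_h(z)-v_h(z)\big].$$
   Context: Setting: $\Omega\subset\mathbb R^d$ ($d\ge1$) is a bounded domain with continuous boundary. For $r>0$, $\Omega^{(r)}=\{x\in\Omega:\operatorname{dist}(x,\partial\Omega)>r\}$. $\mathcal T_h$ is a mesh of closed simplices, $h=\max_T\operatorname{diam}T$, $\Omega_h$ the interior of the union of the simplices, with $\Omega^{(h)}\subset\Omega_h\subset\Omega$; $\mathcal N_h$ is the set of vertices. $\mathbb V_h$ is the space of continuous piecewise linear functions on $\mathcal T_h$ with hat basis $\{\hat\varphi_z\}_{z\in\mathcal N_h}$ ($\hat\varphi_z(z')=\delta_{zz'}$), and $\mathcal I_h$ is the Lagrange interpolant. Parameters $\mathfrak h=(h,\varepsilon,\theta)$ with $\varepsilon\in[h,\operatorname{diam}\Omega]$, $0<\theta\le1$. Interior nodes $\mathcal N_h^I=\mathcal N_h\cap\Omega^{(2\varepsilon)}$;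 boundary nodes $\mathcal N_h^b=\mathcal N_h\setminus\mathcal N_h^I$. $\mathbb S_\theta$ is a finite symmetric subset of the unit sphere $\mathbb S$ such that each $v\in\mathbb S$ has $v_\theta\in\mathbb S_\theta$ with $|v-v_\theta|\le\theta$. For $z\in\mathcal N_h^I$, $\mathcal N_{\mathfrak h}(z)=\{z\}\cup\{z+\varepsilon v_\theta:v_\theta\in\mathbb S_\theta\}$, $S^+_{\mathfrak h}w(z)=\varepsilon^{-1}(\max_{x\in\mathcal N_{\mathfrak h}(z)}w(x)-w(z))$, $S^-_{\mathfrak h}w(z)=\varepsilon^{-1}(w(z)-\min_{x\in\mathcal N_{\mathfrak h}(z)}w(x))$, and $-\Delta^\diamond_{\infty,\mathfrak h}w(z)=-\varepsilon^{-1}(S^+_{\mathfrak h}\mathcal I_hw(z)-S^-_{\mathfrak h}\mathcal I_hw(z))$. Also $\widetilde{\mathcal N}_{\mathfrak h}(z)=\{z\}\cup\{z'\in\mathcal N_h:\exists v_\theta\in\mathbb S_\theta,\ \hat\varphi_{z'}(z+\varepsilon v_\theta)>0\}$. Condition (M.1): for every nonempty $S\subset\mathcal N_h^I$ there exist $z\in S$ and $z'\in\mathcal N_h\setminus S$ with $z'\in\widetilde{\mathcal N}_{\mathfrak h}(z)$. *)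

From HB Require Import structures.
From mathcomp Require Import all_boot all_order all_algebra.
From mathcomp Require Import all_classical all_reals all_analysis.
Set Implicit Arguments. Unset Strict Implicit. Unset Printing Implicit Defensive.
Import Order.TTheory GRing.Theory Num.Theory.
Import numFieldNormedType.Exports.
Local Open Scope classical_set_scope.
Local Open Scope ring_scope.

Section Defs.
Variable R : realType.
Variable n : nat.
Local Notation pt := 'rV[R]_n.

Definition enorm (x : pt) : R := Num.sqrt (\sum_(i < n) x 0 i ^+ 2).
Definition dot (a x : pt) : R := \sum_(i < n) a 0 i * x 0 i.

Definition bdry (O : set pt) : set pt := closure O `\` interior O.
Definition dist_to (x : pt) (A : set pt) : R := inf [set enorm (x - y) | y in A].
Definition inner_set (O : set pt) (r : R) : set pt :=
  [set x | O x /\ r < dist_to x (bdry O)].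
Definition diam (A : set pt) : R := sup [set enorm (x - y) | x in A & y in A].

Definition bounded_domain (O : set pt) : Prop :=
  [/\ O !=set0, open O, connected O & exists B : R, forall x, O x -> enorm x <= B].

Definition simplex := {ffun 'I_n.+1 -> pt}.
Definition conv (s : seq pt) : set pt :=
  [set x | exists l : 'I_(size s) -> R,
     [/\ forall i, 0 <= l i, \sum_i l i = 1 & x = \sum_i l i *: s`_i]].
Definition verts (T : simplex) : seq pt := [seq T i | i <- enum 'I_n.+1].
Definition simplex_set (T : simplex) : set pt := conv (verts T).
Definition affinely_indep (T : simplex) : Prop :=
  forall c : 'I_n.+1 -> R, \sum_i c i = 0 -> \sum_i c i *: T i = 0 ->
    forall i, c i = 0.
(* a (conforming) mesh of nondegenerate closed simplices *)
Definition is_mesh (M : seq simplex) : Prop :=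
  (forall T, T \in M -> affinely_indep T) /\
  (forall T1 T2, T1 \in M -> T2 \in M ->
     simplex_set T1 `&` simplex_set T2 = conv [seq x <- verts T1 | x \in verts T2]).
Definition mesh_union (M : seq simplex) : set pt :=
  [set x | exists2 T, T \in M & simplex_set T x].
Definition meshsize (M : seq simplex) : R :=
  \big[Num.max/0]_(T <- M) diam (simplex_set T).
Definition Omega_h (M : seq simplex) : set pt := interior (mesh_union M).
Definition nodes (M : seq simplex) : seq pt := undup (flatten [seq verts T | T <- M]).

Definition affine_on (A : set pt) (w : pt -> R) : Prop :=
  exists (a : pt) (b : R), forall x, A x -> w x = dot a x + b.
Definition in_Vh (M : seq simplex) (w : pt -> R) : Prop :=
  {within mesh_union M, continuous w} /\
  (forall T, T \in M -> affine_on (simplex_set T) w).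
Definition hat_basis (M : seq simplex) (phi : pt -> pt -> R) : Prop :=
  forall z, z \in nodes M ->
    in_Vh M (phi z) /\ (forall z', z' \in nodes M -> phi z z' = (z == z')%:R).
Definition interp (M : seq simplex) (phi : pt -> pt -> R) (w : pt -> R) (x : pt) : R :=
  \sum_(z <- nodes M) w z * phi z x.

Definition sphere_net (th : R) (S : seq pt) : Prop :=
  [/\ forall u, u \in S -> enorm u = 1,
      forall u, u \in S -> - u \in S &
      forall u, enorm u = 1 -> exists2 u', u' \in S & enorm (u - u') <= th].

Definition stencil (eps : R) (S : seq pt) (z : pt) : seq pt :=
  z :: [seq z + eps *: u | u <- S].
Definition Splus M phi eps S (w : pt -> R) (z : pt) : R :=
  eps^-1 * (\big[Num.max/interp M phi w z]_(x <- stencil eps S z) interp M phi w x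
            - interp M phi w z).
Definition Sminus M phi eps S (w : pt -> R) (z : pt) : R :=
  eps^-1 * (interp M phi w z
            - \big[Num.min/interp M phi w z]_(x <- stencil eps S z) interp M phi w x).
(* mlap ... w z  =  - Delta^diamond_{infty,h} w (z) *)
Definition mlap M phi eps S (w : pt -> R) (z : pt) : R :=
  - eps^-1 * (Splus M phi eps S w z - Sminus M phi eps S w z).

Definition inodes (O : set pt) M (eps : R) : seq pt :=
  [seq z <- nodes M | `[< inner_set O (2 * eps) z >]].
Definition bnodes (O : set pt) M (eps : R) : seq pt :=
  [seq z <- nodes M | ~~ `[< inner_set O (2 * eps) z >]].

Definition tnbhd M (phi : pt -> pt -> R) (eps : R) (S : seq pt) (z z' : pt) : Prop :=
  z' = z \/ (z' \in nodes M /\ exists2 u, u \in S & 0 < phi z' (z + eps *: u)).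
Definition condM1 (O : set pt) M phi eps S : Prop :=
  forall A : set pt, A !=set0 -> (forall z, A z -> z \in inodes O M eps) ->
    exists z z', [/\ A z, z' \in nodes M, ~ A z' & tnbhd M phi eps S z z'].

End Defs.

Definition maxl (R : realType) (s : seq R) : R := foldr Num.max (head 0 s) s.

(* continuous (C^0) boundary, in R^(k+1): locally the strict epigraph of a
   continuous function after a rigid change of coordinates *)
Definition C0_boundary (R : realType) (k : nat) (O : set 'rV[R]_k.+1) : Prop :=
  forall x0, bdry O x0 -> exists r : R, 0 < r /\
    exists Q : 'M[R]_k.+1, Q *m Q^T = 1%:M /\
    exists g : 'rV[R]_k -> R, continuous g /\
      forall y, enorm (y - x0) < r ->
        (O y <-> g (\row_(i < k) ((y - x0) *m Q) 0 (widen_ord (leqnSn k) i))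
                   < ((y - x0) *m Q) 0 ord_max).

From HB Require Import structures.
From mathcomp Require Import all_boot all_order all_algebra.
From mathcomp Require Import all_classical all_reals all_analysis.
From mathcomp Require Import ring lra.
Import Order.TTheory GRing.Theory Num.Theory.
Import numFieldNormedType.Exports.
Set Implicit Arguments.
Unset Strict Implicit.
Unset Printing Implicit Defensive.
Local Open Scope classical_set_scope.
Local Open Scope ring_scope.

(* Suppose the maximum m of w - v over the nodes were attained at interior
   nodes only, and let A be the set of those maximisers at which v is largest.
   At z in A, every stencil value of I_h w - I_h v is a convex combination of
   nodal values, hence at most m; comparing the one-sided increments S^+ and
   S^- of I_h w and I_h v, the two hypotheses on the discrete infinity
   Laplacian force both interpolants to be constant on the stencil of z.  Then
   every node whose hat function is positive at a stencil point of z lies in A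
   again, which contradicts (M.1).  The case of a supersolution v reduces to
   this one through (w, v) |-> (-v, -w). *)

Section EuclideanNorm.
Variables (R : realType) (n : nat).
Local Notation pt := 'rV[R]_n.
Implicit Types x y : pt.

Lemma enorm_ge0 x : 0 <= enorm x.
Proof. exact: sqrtr_ge0. Qed.

Lemma enormZ (c : R) x : enorm (c *: x) = `|c| * enorm x.
Proof.
rewrite /enorm -sqrtr_sqr -sqrtrM ?sqr_ge0 // mulr_sumr.
by congr Num.sqrt; apply: eq_bigr => i _; rewrite mxE exprMn.
Qed.

Lemma enormN x : enorm (- x) = enorm x.
Proof. by rewrite -scaleN1r enormZ normrN normr1 mul1r. Qed.

Lemma enorm_dot x : enorm x = Num.sqrt (dot x x).
Proof. by congr Num.sqrt; apply: eq_bigr => i _; rewrite expr2. Qed.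

Lemma dot_ge0 x : 0 <= dot x x.
Proof. by apply: sumr_ge0 => i _; rewrite -expr2 sqr_ge0. Qed.

(* Lagrange's identity: twice the defect is a sum of squares. *)
Lemma dot_sqr_le x y : dot x y ^+ 2 <= dot x x * dot y y.
Proof.
pose a i : R := x 0 i; pose b i : R := y 0 i.
pose F i j := a i * a i * (b j * b j); pose G i j := a i * b i * (a j * b j).
have lagrange : \sum_i \sum_j (a i * b j - a j * b i) ^+ 2 =
    2 * (dot x x * dot y y - dot x y ^+ 2).
  have -> : \sum_i \sum_j (a i * b j - a j * b i) ^+ 2 =
      \sum_i \sum_j F i j + \sum_i \sum_j F j i - 2 * \sum_i \sum_j G i j.
    rewrite mulr_sumr -big_split -sumrB; apply: eq_bigr => i _.
    rewrite mulr_sumr -big_split -sumrB; apply: eq_bigr => j _.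
    by rewrite /F /G /=; ring.
  rewrite [X in _ + X - _]exchange_big /F /G /dot expr2 !big_distrlr /= /a /b; ring.
rewrite -subr_ge0 -(pmulr_rge0 _ (ltr0Sn R 1)) -lagrange.
by do 2!(apply: sumr_ge0 => ? _); apply: sqr_ge0.
Qed.

Lemma enormD x y : enorm (x + y) <= enorm x + enorm y.
Proof.
have dotD : dot (x + y) (x + y) = dot x x + 2 * dot x y + dot y y.
  rewrite /dot mulr_sumr -!big_split; apply: eq_bigr => i _.
  by rewrite mxE /=; ring.
have le_dot : dot x y <= enorm x * enorm y.
  rewrite !enorm_dot -sqrtrM ?dot_ge0 //.
  apply: le_trans (ler_norm _) _.
  by rewrite -sqrtr_sqr ler_sqrt ?mulr_ge0 ?dot_ge0 // dot_sqr_le.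
rewrite -(ger0_norm (addr_ge0 (enorm_ge0 x) (enorm_ge0 y))) -sqrtr_sqr.
rewrite enorm_dot ler_sqrt ?sqr_ge0 // dotD sqrrD.
have := sqr_sqrtr (dot_ge0 x); have := sqr_sqrtr (dot_ge0 y).
rewrite -!enorm_dot; lra.
Qed.

End EuclideanNorm.

Section Boundary.
Variables (R : realType) (n : nat).
Local Notation pt := 'rV[R]_n.
Implicit Types (O A : set pt) (x y z d : pt).

Lemma dist_to_le A x y : A y -> dist_to x A <= enorm (x - y).
Proof.
move=> Ay; apply: ge_inf; last by exists y.
by exists 0 => _ [y' _ <-]; exact: enorm_ge0.
Qed.

Lemma connected_sub_open O A : open O -> connected A -> A `&` O !=set0 ->
  (forall y, A y -> ~ bdry O y) -> A `<=` O.
Proof.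
move=> oO cA AO nbA; suff <- : A `&` O = A by move=> y [].
apply: cA => //; first by exists O.
exists (closure O); first exact: closed_closure.
apply/seteqP; split => y [Ay Oy]; split => //; first exact: subset_closure.
apply: contrapT => nOy; apply: (nbA y Ay); split => //.
by rewrite (proj1 (interior_id O) oO).
Qed.

(* The segment from [z] to [z + d] is connected and cannot cross the boundary. *)
Lemma shift_mem_open O z d : open O -> O z ->
  (forall y, bdry O y -> enorm d < enorm (z - y)) -> O (z + d).
Proof.
move=> oO Oz short.
pose f t : pt := z + t *: d.
have f_cont : continuous f.
  by move=> t; apply: cvgD; [exact: cvg_cst | apply: cvgZr_tmp; exact: cvg_id].
have in01 (t : R) : 0 <= t <= 1 -> [set` `[0, 1]] t by rewrite /= in_itv.
suff : f @` [set` `[0, 1]] `<=` O.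
  by apply; exists 1; [apply: in01; rewrite lexx ler01 | rewrite /f scale1r].
apply: connected_sub_open => //.
- apply: connected_continuous_connected; first exact: segment_connected.
  exact: continuous_subspaceT.
- exists z; split => //; exists 0; first by apply: in01; rewrite lexx ler01.
  by rewrite /f scale0r addr0.
- move=> _ [t + <-] bt; rewrite /= in_itv /= => /andP[t0 t1]; have := short _ bt.
  rewrite /f opprD addrA subrr add0r enormN enormZ ger0_norm //.
  by have := enorm_ge0 d; nra.
Qed.

Lemma inner_set_shift O r z d : open O -> 0 <= r ->
  inner_set O (r + enorm d) z -> inner_set O r (z + d).
Proof.
move=> oO r0 [Oz far]; set D := dist_to z (bdry O) in far.
have D_le y : bdry O y -> D <= enorm (z - y) by exact: dist_to_le.
have [y0 by0] : bdry O !=set0.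
  apply/set0P/negP => /eqP b0; move: far.
  by rewrite /D b0 /dist_to image_set0 inf0; have := enorm_ge0 d; lra.
split; first by apply: shift_mem_open => // y /D_le; have := enorm_ge0 d; lra.
apply: lt_le_trans (_ : D - enorm d <= _); first lra.
apply: lb_le_inf; first by exists (enorm (z + d - y0)), y0.
move=> _ [y by_ <-]; have := enormD (- d) (z + d - y); have := D_le y by_.
rewrite enormN (_ : - d + (z + d - y) = z - y); first lra.
by rewrite [z + d]addrC -addrA addKr.
Qed.

End Boundary.

Section Extrema.
Variable R : realType.
Implicit Types s t : seq R.

Lemma bigmax_attained (T : eqType) (xs : seq T) (F : T -> R) (x0 : R) :
  \big[Num.max/x0]_(x <- xs) F x = x0 \/
  exists2 x, x \in xs & \big[Num.max/x0]_(x <- xs) F x = F x.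
Proof.
rewrite big_seq_cond.
elim/big_ind: _ => [|a b Ha Hb|x /andP[xin _]]; [by left | | by right; exists x].
by case: leP.
Qed.

Lemma maxl_ub s x : x \in s -> x <= maxl s.
Proof. by move=> xs; rewrite /maxl foldrE; apply: le_bigmax_seq. Qed.

Lemma maxl_mem s : s != [::] -> maxl s \in s.
Proof.
case: s => [//|a s] _; rewrite /maxl foldrE /=.
by case: (bigmax_attained (a :: s) id a) => [->|[x xs ->]]; rewrite ?mem_head.
Qed.

Lemma maxl_sub s t : {subset s <= t} -> maxl t \in s -> maxl s = maxl t.
Proof.
move=> st ts; have /maxl_mem/st ss : s != [::] by apply: contraTneq ts => ->.
by apply/eqP; rewrite eq_le !maxl_ub.
Qed.

End Extrema.

Section Increments.
Variables (R : realType) (T : eqType) (xs : seq T) (z : T).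
Implicit Types F G W V : T -> R.

Definition max_incr F := \big[Num.max/F z]_(x <- xs) F x - F z.
Definition incr_balance F := max_incr F - max_incr (fun x => - F x).

Lemma max_incr_ge0 F : 0 <= max_incr F.
Proof. by rewrite subr_ge0 bigmax_ge_id. Qed.

Lemma incr_le_max_incr F x : x \in xs -> F x - F z <= max_incr F.
Proof. by move=> xin; rewrite lerD2r; apply: le_bigmax_seq. Qed.

Lemma max_incr_attained F :
  max_incr F = 0 \/ exists2 x, x \in xs & max_incr F = F x - F z.
Proof.
rewrite /max_incr; case: (bigmax_attained xs F (F z)) => [->|[x xin ->]].
  by left; rewrite subrr.
by right; exists x.
Qed.

Lemma max_incr_le F G : {in xs, forall x, F x - F z <= G x - G z} ->
  max_incr F <= max_incr G.
Proof.
move=> FG; case: (max_incr_attained F) => [->|[x xin ->]]; first exact: max_incr_ge0.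
exact: le_trans (FG x xin) (incr_le_max_incr G xin).
Qed.

Lemma min_decrE F :
  F z - \big[Num.min/F z]_(x <- xs) F x = max_incr (fun x => - F x).
Proof.
by rewrite /max_incr -(big_morph _ (@oppr_min R) (erefl (- F z))) opprK addrC.
Qed.

Lemma incr_balanceN F : incr_balance (fun x => - F x) = - incr_balance F.
Proof.
rewrite /incr_balance [RHS]opprB; congr (_ - max_incr _).
by apply/funext => x; rewrite opprK.
Qed.

(* At a maximum of [W - V], [W] increases less and decreases more than [V];
   a larger balance for [W] forces equality, and the tie-breaking hypothesis
   then rules out any strict increase. *)
Lemma flat_at_local_max W V :
  {in xs, forall x, W x - V x <= W z - V z} ->
  incr_balance V <= incr_balance W -> 0 <= incr_balance W ->
  {in xs, forall x, W x - V x = W z - V z -> V x <= V z} ->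
  {in xs, forall x, W x = W z /\ V x = V z}.
Proof.
rewrite /incr_balance => Umax bal bal0 tie.
have PWV : max_incr W <= max_incr V.
  by apply: max_incr_le => x /Umax; lra.
have QVW : max_incr (fun x => - V x) <= max_incr (fun x => - W x).
  by apply: max_incr_le => x /Umax; lra.
have PW0 : max_incr W <= 0.
  case: (max_incr_attained W) => [->//|[x xin PWx]].
  have := incr_le_max_incr V xin; have := Umax x xin.
  have := tie x xin; lra.
have PV0 := max_incr_ge0 V; have QV0 := max_incr_ge0 (fun x => - V x).
have QW0 := max_incr_ge0 (fun x => - W x).
move=> x xin; have := incr_le_max_incr W xin; have := incr_le_max_incr V xin.
have := incr_le_max_incr (fun x => - W x) xin.
have := incr_le_max_incr (fun x => - V x) xin.
by move=> /= *; split; lra.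
Qed.

End Increments.

Section Averages.
Variables (R : realType) (p : nat) (l : 'I_p -> R).
Hypotheses (l_ge0 : forall i, 0 <= l i) (l_sum1 : \sum_i l i = 1).

Lemma avg_le (c : 'I_p -> R) m :
  (forall i, 0 < l i -> c i <= m) -> \sum_i l i * c i <= m.
Proof.
move=> cm; rewrite -[leRHS]mul1r -l_sum1 mulr_suml; apply: ler_sum => i _.
have := l_ge0 i; rewrite le_eqVlt => /predU1P[<-|li]; first by rewrite !mul0r.
by rewrite ler_pM2l // cm.
Qed.

Lemma avg_eq_max (c : 'I_p -> R) m :
  (forall i, 0 < l i -> c i <= m) -> \sum_i l i * c i = m ->
  forall i, 0 < l i -> c i = m.
Proof.
move=> cm avg.
have gap_ge0 i : 0 <= l i * (m - c i).
  have := l_ge0 i; rewrite le_eqVlt => /predU1P[<-|li]; first by rewrite mul0r.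
  by rewrite mulr_ge0 ?(ltW li) // subr_ge0 cm.
have gap0 : \sum_i l i * (m - c i) = 0.
  under eq_bigr do rewrite mulrBr.
  by rewrite sumrB -mulr_suml l_sum1 mul1r avg subrr.
move=> i li; have /eqP := @psumr_eq0P _ _ predT _ (fun i _ => gap_ge0 i) gap0 i isT.
by rewrite mulf_eq0 gt_eqF //= subr_eq0 => /eqP.
Qed.

End Averages.

Section Interpolation.
Variables (R : realType) (n : nat) (M : seq (simplex R n)).
Variable phi : 'rV[R]_n -> 'rV[R]_n -> R.
Local Notation pt := 'rV[R]_n.
Hypothesis hb : hat_basis M phi.

Lemma nodes_uniq : uniq (nodes M).
Proof. exact: undup_uniq. Qed.

Lemma sum_nodes_delta (f : pt -> R) y : y \in nodes M ->
  \sum_(z <- nodes M) f z * (z == y)%:R = f y.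
Proof.
move=> yN; rewrite (big_rem y) //= eqxx mulr1 big1_seq ?addr0 //.
move=> z /andP[_ zN]; case: eqVneq zN => [->|_ _]; last by rewrite mulr0.
by rewrite (mem_rem_uniqF y nodes_uniq).
Qed.

Lemma interp_node f y : y \in nodes M -> interp M phi f y = f y.
Proof.
move=> yN; rewrite /interp big_seq_cond.
under eq_bigr => z /andP[zN _] do rewrite (proj2 (hb zN)) //.
by rewrite -big_seq_cond sum_nodes_delta.
Qed.

Lemma interpB f g x :
  interp M phi (fun y => f y - g y) x = interp M phi f x - interp M phi g x.
Proof. by rewrite /interp -sumrB; apply: eq_bigr => z _; rewrite mulrBl. Qed.

Lemma interpN f x : interp M phi (fun y => - f y) x = - interp M phi f x.
Proof. by rewrite /interp -sumrN; apply: eq_bigr => z _; rewrite mulNr. Qed.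

Lemma vert_nodes T x : T \in M -> x \in verts T -> x \in nodes M.
Proof.
move=> TM xT; rewrite mem_undup; apply/flattenP.
by exists (verts T) => //; apply: map_f.
Qed.

Lemma vert_in_simplex (T : simplex R n) x : x \in verts T -> simplex_set T x.
Proof.
rewrite -index_mem => xT; pose i := Ordinal xT.
exists (fun j => (j == i)%:R); split.
- by move=> j; rewrite ler0n.
- by rewrite (bigD1 i) //= eqxx big1 ?addr0 // => j /negbTE ->.
- rewrite (bigD1 i) //= eqxx scale1r big1 ?addr0 ?nth_index // -?index_mem //.
  by move=> j /negbTE ->; rewrite scale0r.
Qed.

Lemma node_in_mesh z : z \in nodes M -> mesh_union M z.
Proof.
rewrite mem_undup => /flattenP[_ /mapP[T TM ->] zT].
by exists T => //; apply: vert_in_simplex.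
Qed.

Lemma dot_sum p (a : pt) (l : 'I_p -> R) (s : 'I_p -> pt) :
  dot a (\sum_i l i *: s i) = \sum_i l i * dot a (s i).
Proof.
rewrite /dot; under eq_bigr => j _ do rewrite summxE mulr_sumr.
rewrite exchange_big; apply: eq_bigr => i _; rewrite mulr_sumr.
by apply: eq_bigr => j _; rewrite mxE mulrCA.
Qed.

(* On a simplex of the mesh every hat function is affine, so its value at a
   convex combination of the vertices is the same combination of its nodal
   values. *)
Lemma interp_mesh_avg x : mesh_union M x ->
  exists p (s : 'I_p -> pt) (l : 'I_p -> R),
  [/\ forall i, s i \in nodes M, forall i, 0 <= l i, \sum_i l i = 1 &
      forall f, interp M phi f x = \sum_i l i * f (s i)].
Proof.
move=> [T TM [l [l_ge0 l_sum1 ->]]].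
set s := fun i : 'I_(size (verts T)) => (verts T)`_i.
have sN i : s i \in nodes M by apply: vert_nodes TM _; apply: mem_nth.
have hat y : y \in nodes M -> phi y (\sum_i l i *: s i) = \sum_i l i * (y == s i)%:R.
  move=> yN; have [[_ aff] delta] := hb yN; have [a [b phiE]] := aff T TM.
  have sT i : simplex_set T (s i) by apply: vert_in_simplex; apply: mem_nth.
  rewrite phiE; last by exists l.
  have -> : b = \sum_i l i * b by rewrite -mulr_suml l_sum1 mul1r.
  rewrite dot_sum -big_split /=.
  by apply: eq_bigr => i _; rewrite -mulrDr -phiE // delta.
exists _, s, l; split => // f; rewrite /interp big_seq_cond.
under eq_bigr => y /andP[yN _] do rewrite hat // mulr_sumr.
rewrite -big_seq_cond exchange_big; apply: eq_bigr => i _.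
under eq_bigr do rewrite mulrCA.
by rewrite -mulr_sumr sum_nodes_delta.
Qed.

Lemma hat_pos_support x p (s : 'I_p -> pt) (l : 'I_p -> R) y :
  (forall f, interp M phi f x = \sum_i l i * f (s i)) ->
  y \in nodes M -> 0 < phi y x -> exists2 i, 0 < l i & s i = y.
Proof.
move=> avg yN; apply: contraPP => no_i; apply/negP; rewrite -leNgt.
have -> : phi y x = interp M phi (fun z => (z == y)%:R) x.
  by rewrite /interp (eq_bigr _ (fun z _ => mulrC _ _)) sum_nodes_delta.
rewrite avg; apply: sumr_le0 => i _; case: eqVneq => [siy|_]; last by rewrite mulr0.
by rewrite mulr1 leNgt; apply/negP => li; apply: no_i; exists i.
Qed.

End Interpolation.

Section DiscreteInfinityLaplacian.
Variables (R : realType) (n : nat) (M : seq (simplex R n)).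
Variables (phi : 'rV[R]_n -> 'rV[R]_n -> R) (eps : R) (S : seq 'rV[R]_n).
Implicit Types (f : 'rV[R]_n -> R) (z : 'rV[R]_n).

Lemma mlapE f z :
  mlap M phi eps S f z =
  - eps^-1 ^+ 2 * incr_balance (stencil eps S z) z (interp M phi f).
Proof.
rewrite /mlap /Splus /Sminus min_decrE /incr_balance /max_incr; ring.
Qed.

Lemma mlapN f z : mlap M phi eps S (fun x => - f x) z = - mlap M phi eps S f z.
Proof.
rewrite !mlapE -[RHS]mulrN -incr_balanceN; congr (_ * incr_balance _ _ _).
by apply/funext => x; apply: interpN.
Qed.

End DiscreteInfinityLaplacian.

Section MaxPrinciple.
Variables (R : realType) (n : nat) (O : set 'rV[R]_n) (M : seq (simplex R n)).
Variables (phi : 'rV[R]_n -> 'rV[R]_n -> R) (eps : R) (S : seq 'rV[R]_n).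
Local Notation pt := 'rV[R]_n.
Hypotheses (oO : open O) (inner_mesh : inner_set O (meshsize M) `<=` Omega_h M).
Hypotheses (hb : hat_basis M phi) (mesh_eps : meshsize M <= eps).
Hypothesis S_unit : forall u, u \in S -> enorm u = 1.
Hypothesis hM1 : condM1 O M phi eps S.

Lemma eps_ge0 : 0 <= eps.
Proof. by apply: le_trans mesh_eps; apply: bigmax_ge_id. Qed.

Lemma stencil_in_mesh z x :
  z \in inodes O M eps -> x \in stencil eps S z -> mesh_union M x.
Proof.
rewrite mem_filter => /andP[/asboolP zI zN].
rewrite inE => /predU1P[->|/mapP[u uS ->]]; first exact: node_in_mesh.
apply: interior_subset; apply: inner_mesh.
suff : inner_set O eps (z + eps *: u).
  by move=> [Ox far]; split => //; apply: le_lt_trans mesh_eps far.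
apply: inner_set_shift => //; first exact: eps_ge0.
rewrite enormZ S_unit // mulr1 ger0_norm ?eps_ge0 //.
by rewrite (_ : eps + eps = 2 * eps) //; ring.
Qed.

Variables w v : pt -> R.
Hypothesis cmp_wv :
  forall z, z \in inodes O M eps -> mlap M phi eps S w z <= mlap M phi eps S v z.
Hypothesis sub_w : forall z, z \in inodes O M eps -> mlap M phi eps S w z <= 0.

Lemma stencil_flat m z :
  (forall y, y \in nodes M -> w y - v y <= m) ->
  z \in inodes O M eps -> w z - v z = m ->
  (forall y, y \in nodes M -> w y - v y = m -> v y <= v z) ->
  {in stencil eps S z, forall x, interp M phi w x = w z /\ interp M phi v x = v z}.
Proof.
move=> le_m zI Uz tie.
have zN : z \in nodes M by move: zI; rewrite mem_filter => /andP[].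
rewrite -(interp_node hb w zN) -(interp_node hb v zN) in Uz tie *.
have [->|eps_neq0] := eqVneq eps 0.
  by move=> x; rewrite inE => /predU1P[->|/mapP[u _ ->]]; rewrite ?scale0r ?addr0.
have c_gt0 : 0 < eps^-1 ^+ 2.
  by rewrite exprn_gt0 // invr_gt0 lt_neqAle eq_sym eps_neq0 eps_ge0.
have avg_at x (xst : x \in stencil eps S z) :=
  interp_mesh_avg hb (stencil_in_mesh zI xst).
apply: flat_at_local_max.
- move=> x /avg_at[p [s [l [sN l0 l1 avg]]]].
  rewrite -interpB avg Uz; apply: avg_le => // i _; exact: le_m.
- by have := cmp_wv zI; rewrite !mlapE !mulNr lerN2 ler_pM2l.
- by have := sub_w zI; rewrite mlapE mulNr oppr_le0 pmulr_rge0.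
- move=> x /avg_at[p [s [l [sN l0 l1 avg]]]].
  rewrite -interpB !avg Uz => Ux; apply: avg_le => // i li.
  exact: tie _ (sN i) (avg_eq_max l0 l1 (fun j _ => le_m _ (sN j)) Ux li).
Qed.

Lemma bnode_attains_max m :
  (forall y, y \in nodes M -> w y - v y <= m) ->
  (exists2 y, y \in nodes M & w y - v y = m) ->
  exists2 b, b \in bnodes O M eps & w b - v b = m.
Proof.
move=> le_m [y0 y0N Uy0]; apply: contrapT => no_b.
pose As := [seq y <- nodes M | w y - v y == m].
have AsP y : (y \in As) = (y \in nodes M) && (w y - v y == m).
  by rewrite mem_filter andbC.
have As_I y : y \in As -> y \in inodes O M eps.
  rewrite AsP mem_filter => /andP[yN /eqP Uy]; rewrite yN andbT.
  by apply: contraT => yB; case: no_b; exists y; rewrite // mem_filter yB.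
pose gm := maxl [seq v y | y <- As].
have gm_ub y : y \in As -> v y <= gm by move=> yA; apply/maxl_ub/map_f.
have y0A : y0 \in As by rewrite AsP y0N Uy0 eqxx.
have /mapP[z0 z0A gm_z0] : gm \in [seq v y | y <- As].
  by apply: maxl_mem; rewrite -size_eq0 size_map size_eq0; apply: contraTneq y0A => ->.
pose A := [set y | y \in As /\ v y = gm].
have [|y /= [/As_I //]|] := hM1 (A := A); first by exists z0.
move=> z [z' [[zA vz] z'N z'A [z'z|[_ [u uS phi_pos]]]]].
  by apply: z'A; rewrite z'z.
have zI := As_I z zA; move: zA; rewrite AsP => /andP[zN /eqP Uz].
have xst : z + eps *: u \in stencil eps S z by apply/mem_behead/map_f.
have [p [s [l [sN l0 l1 avg]]]] := interp_mesh_avg hb (stencil_in_mesh zI xst).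
have tie y : y \in nodes M -> w y - v y = m -> v y <= v z.
  by move=> yN Uy; rewrite vz; apply: gm_ub; rewrite AsP yN Uy eqxx.
have [wx vx] := stencil_flat le_m zI Uz tie xst.
have [i li siz'] := hat_pos_support avg z'N phi_pos.
have Ux : \sum_j l j * (w (s j) - v (s j)) = m.
  by rewrite -(avg (fun y => w y - v y)) interpB wx vx.
have Us j : 0 < l j -> w (s j) - v (s j) = m.
  exact: (avg_eq_max l0 l1 (fun k _ => le_m _ (sN k)) Ux).
have sA j : 0 < l j -> s j \in As by move=> lj; rewrite AsP sN Us ?eqxx.
have vx' : \sum_j l j * v (s j) = gm by rewrite -avg vx vz.
have vs j : 0 < l j -> v (s j) = gm.
  exact: (avg_eq_max l0 l1 (fun k lk => gm_ub _ (sA k lk)) vx').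
by apply: z'A; rewrite -siz'; split; [exact: sA | exact: vs].
Qed.

Lemma maxl_nodes_bnodes :
  maxl [seq w z - v z | z <- nodes M] = maxl [seq w z - v z | z <- bnodes O M eps].
Proof.
have [N0|N_ne] := eqVneq (nodes M) [::]; first by rewrite /bnodes N0.
set m := maxl _.
have /mapP[y0 y0N m_y0] : m \in [seq w z - v z | z <- nodes M].
  by apply: maxl_mem; rewrite -size_eq0 size_map size_eq0.
have [|b bB Ub] := @bnode_attains_max m _ (ex_intro2 _ _ y0 y0N (esym m_y0)).
  by move=> y yN; apply/maxl_ub/map_f.
apply/esym/maxl_sub; last by rewrite -/m -Ub; apply: map_f.
by move=> _ /mapP[y yB ->]; apply: map_f; move: yB; rewrite mem_filter => /andP[].
Qed.

End MaxPrinciple.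

Theorem theorem3p3 (R : realType) (k : nat) (O : set 'rV[R]_k.+1)
  (M : seq (simplex R k.+1)) (phi : 'rV[R]_k.+1 -> 'rV[R]_k.+1 -> R)
  (eps th : R) (S : seq 'rV[R]_k.+1) (w v : 'rV[R]_k.+1 -> R) :
  bounded_domain O -> C0_boundary O ->
  is_mesh M -> inner_set O (meshsize M) `<=` Omega_h M -> Omega_h M `<=` O ->
  hat_basis M phi ->
  meshsize M <= eps -> eps <= diam O -> 0 < th -> th <= 1 -> sphere_net th S ->
  condM1 O M phi eps S ->
  in_Vh M w -> in_Vh M v ->
  (forall z, z \in inodes O M eps -> mlap M phi eps S w z <= mlap M phi eps S v z) ->
  ((forall z, z \in inodes O M eps -> mlap M phi eps S w z <= 0) \/
   (forall z, z \in inodes O M eps -> 0 <= mlap M phi eps S v z)) ->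
  maxl [seq w z - v z | z <- nodes M] = maxl [seq w z - v z | z <- bnodes O M eps].
Proof.
move=> [_ oO _ _] _ _ inner_mesh _ hb mesh_eps _ _ _ [S_unit _ _] hM1 _ _ cmp.
case=> [sub_w|sup_v].
  exact: (maxl_nodes_bnodes oO inner_mesh hb mesh_eps S_unit hM1 cmp sub_w).
have UN : (fun z => - v z - - w z) =1 (fun z => w z - v z).
  by move=> z; rewrite opprK addrC.
rewrite -!(eq_map UN).
apply: (maxl_nodes_bnodes oO inner_mesh hb mesh_eps S_unit hM1) => z zI.
  by rewrite !mlapN lerN2 cmp.
by rewrite mlapN oppr_le0 sup_v.
Qed.
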